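(* For any $k\geq1$, $n\geq0$ and $\ell\geq0$, the number of $k$-packed matrices of size $n$ with exactly $\ell$ nonzero entries is $$\#\mathcal{P}_{k,n,\ell}=\sum_{0\leq i,j\leq n}(-1)^{i+j}\binom{n}{i}\binom{n}{j}\binom{ij}{\ell}k^{\ell}.$$
   Context: $A_k=\{0,1,\dots,k\}$. A $k$-packed matrix of size $n$ is an $n\times n$ matrix with entries in $A_k$ such that each row and each column contains at least one nonzero entry (the empty matrix is the unique one of size $0$). $\mathcal{P}_{k,n,\ell}$ is the set of $k$-packed matrices of size $n$ with exactly $\ell$ nonzero entries. Binomial coefficients $\binom{m}{\ell}$ are $0$ when $\ell>m$, and $\binom{0}{0}=1$. *)

From mathcomp Require Import all_boot all_order all_algebra.
Set Implicit Arguments. Unset Strict Implicit. Unset Printing Implicit Defensive.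

(* A_k = {0,...,k} is represented by the ordinal type 'I_k.+1.
   An n x n matrix with entries in A_k is an element of 'M['I_k.+1]_n. *)

Definition nonzero_entry (k : nat) (a : 'I_k.+1) : bool := val a != 0%N.

Definition packed (k n : nat) (M : 'M['I_k.+1]_n) : bool :=
  [forall i : 'I_n, exists j : 'I_n, nonzero_entry (M i j)] &&
  [forall j : 'I_n, exists i : 'I_n, nonzero_entry (M i j)].

Definition nnz (k n : nat) (M : 'M['I_k.+1]_n) : nat :=
  #|[set ij : 'I_n * 'I_n | nonzero_entry (M ij.1 ij.2)]|.

Definition Pset (k n l : nat) : {set 'M['I_k.+1]_n} :=
  [set M | packed M && (nnz M == l)].

From mathcomp Require Import all_boot all_order all_algebra.
From mathcomp Require Import ring zify.
Import GRing.Theory.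
Set Implicit Arguments. Unset Strict Implicit.
Local Open Scope ring_scope.

(* Inclusion-exclusion over the sets A of empty rows and B of empty columns:
   the indicator of "packed" expands as the signed sum over (A, B) of the
   indicator of "every entry outside ~: A x ~: B vanishes".  Matrices of the
   latter kind with l nonzero entries are counted by choosing their support
   among the #|~: A| * #|~: B| allowed positions and a nonzero value in each,
   giving 'C(#|~: A| * #|~: B|, l) * k ^ l.  Grouping (~: A, ~: B) by size
   yields the formula. *)

Lemma nonzero_entryE k (a : 'I_k.+1) : nonzero_entry a = (a != ord0).
Proof. by rewrite /nonzero_entry -(inj_eq val_inj). Qed.

Lemma natr_card_set (T : finType) (P : pred T) :
  #|[set x | P x]|%:R = \sum_x (P x : nat)%:R :> int.
Proof.
rewrite -natr_sum -sum1dep_card big_mkcond /=.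
by congr _%:R; apply: eq_bigr => x _; case: (P x).
Qed.

Section FfunSupport.
Variables (T : finType) (k : nat).

Definition ffun_supp (f : {ffun T -> 'I_k.+1}) : {set T} :=
  [set x | nonzero_entry (f x)].

Lemma card_ffun_supp_eq (U : {set T}) :
  #|[set f | ffun_supp f == U]| = (k ^ #|U|)%N.
Proof.
have -> : [set f | ffun_supp f == U] =
          [set f in pffun_on ord0 U [pred a : 'I_k.+1 | a != ord0]].
  apply/setP => f; rewrite !inE; apply/eqP/pffun_onP => [<- | [suppU imU]].
    split; first by apply/subsetP => x; rewrite !inE nonzero_entryE.
    by move=> y /imageP[x]; rewrite inE nonzero_entryE => fx_nz ->.
  apply/setP => x; rewrite inE nonzero_entryE; apply/idP/idP => [fx_nz | Ux].
    by apply: (subsetP suppU); rewrite inE.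
  exact: imU (image_f f Ux).
rewrite cardsE card_pffun_on; congr (_ ^ _)%N.
have := cardC [pred a : 'I_k.+1 | a != ord0]; rewrite card_ord.
have -> : #|[predC [pred a : 'I_k.+1 | a != ord0]]| = 1%N.
  by rewrite -(card1 (@ord0 k)); apply: eq_card => a; rewrite !inE negbK.
by rewrite addn1 => -[].
Qed.

Lemma card_ffun_supp_sub (S : {set T}) l :
  #|[set f | (#|ffun_supp f| == l) && (ffun_supp f \subset S)]| =
  ('C(#|S|, l) * k ^ l)%N.
Proof.
rewrite -cards_draws -sum1_card.
rewrite (partition_big ffun_supp [pred U : {set T} | (U \subset S) && (#|U| == l)]);
  last by move=> f; rewrite inE andbC.
rewrite /= -sum_nat_cond_const; apply: eq_bigr => U /andP[subUS /eqP <-].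
rewrite sum1_card -card_ffun_supp_eq; apply: eq_card => f.
rewrite !inE -topredE /= !inE.
by case: (ffun_supp f =P U) => [->|]; rewrite ?eqxx ?subUS ?andbF.
Qed.

End FfunSupport.

Section ZeroRowsCols.
Variables (k n : nat).

Definition zero_rows_cols (A B : {set 'I_n}) (M : 'M['I_k.+1]_n) : bool :=
  [forall i in A, forall j, ~~ nonzero_entry (M i j)] &&
  [forall j in B, forall i, ~~ nonzero_entry (M i j)].

Lemma nnz_mx_val (M : 'M['I_k.+1]_n) : nnz M = #|ffun_supp (mx_val M)|.
Proof. by apply: eq_card => -[i j]; rewrite !inE. Qed.

Lemma zero_rows_colsE A B (M : 'M['I_k.+1]_n) :
  zero_rows_cols A B M = (ffun_supp (mx_val M) \subset setX (~: A) (~: B)).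
Proof.
apply/andP/subsetP => [[/forall_inP zA /forall_inP zB] [i j] | suppAB].
  rewrite !inE /= => Mij_nz; apply/andP; split.
    by apply/negP => /zA /forallP /(_ j); rewrite Mij_nz.
  by apply/negP => /zB /forallP /(_ i); rewrite Mij_nz.
split.
  apply/forall_inP => i Ai; apply/forallP => j; apply/negP => Mij_nz.
  by have := suppAB (i, j); rewrite !inE Ai; move/(_ Mij_nz).
apply/forall_inP => j Bj; apply/forallP => i; apply/negP => Mij_nz.
by have := suppAB (i, j); rewrite !inE Bj andbF; move/(_ Mij_nz).
Qed.

Lemma card_zero_rows_cols A B l :
  #|[set M : 'M['I_k.+1]_n | (nnz M == l) && zero_rows_cols A B M]| =
  ('C(#|~: A| * #|~: B|, l) * k ^ l)%N.
Proof.
rewrite -cardsX -card_ffun_supp_sub -(card_imset _ val_inj); apply: eq_card => f.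
rewrite [RHS]inE; apply/imsetP/idP => [[M + ->] | suppf].
  by rewrite inE nnz_mx_val zero_rows_colsE.
by exists (Matrix f); rewrite // inE nnz_mx_val zero_rows_colsE.
Qed.

End ZeroRowsCols.

Lemma natr_forall_negb (T : finType) (z : pred T) :
  ([forall i, ~~ z i] : nat)%:R =
  \sum_(A : {set T}) (-1) ^+ #|A| * ([forall i in A, z i] : nat)%:R :> int.
Proof.
have -> : ([forall i, ~~ z i] : nat)%:R = \prod_i (- (z i : nat)%:R + 1) :> int.
  case: (boolP [forall i, ~~ z i]) => [/forallP zF | /forallPn [i]].
    by rewrite big1 // => i _; rewrite (negPf (zF i)) oppr0 add0r.
  by rewrite negbK => zi; rewrite (bigD1 i) //= zi addNr mul0r.
rewrite bigA_distr; apply: eq_bigr => A _.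
rewrite -big_mkcond /= prodrN; congr (_ * _).
case: (boolP [forall i in A, z i]) => [/forall_inP zA | /forall_inPn [i Ai /negPf zi]].
  by rewrite big1 // => i /zA ->.
by rewrite (bigD1 i) //= zi mul0r.
Qed.

Lemma natr_packed k n (M : 'M['I_k.+1]_n) :
  (packed M : nat)%:R =
  \sum_(A : {set 'I_n}) \sum_(B : {set 'I_n})
     (-1) ^+ (#|A| + #|B|) * (zero_rows_cols A B M : nat)%:R :> int.
Proof.
have existsE (P : pred 'I_n) : [exists x, P x] = ~~ [forall x, ~~ P x].
  by rewrite negb_forall; apply: eq_existsb => x; rewrite negbK.
have rowsE : [forall i, exists j, nonzero_entry (M i j)] =
             [forall i, ~~ [forall j, ~~ nonzero_entry (M i j)]].
  by apply: eq_forallb => i; apply: existsE.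
have colsE : [forall j, exists i, nonzero_entry (M i j)] =
             [forall j, ~~ [forall i, ~~ nonzero_entry (M i j)]].
  by apply: eq_forallb => j; apply: existsE.
rewrite /packed rowsE colsE.
rewrite -mulnb natrM !natr_forall_negb big_distrl; apply: eq_bigr => A _.
rewrite big_distrr; apply: eq_bigr => B _.
by rewrite /zero_rows_cols -mulnb natrM exprD mulrACA.
Qed.

Lemma card_Pset_subsets k n l :
  #|Pset k n l|%:R =
  \sum_(A : {set 'I_n}) \sum_(B : {set 'I_n})
     (-1) ^+ (#|A| + #|B|) * ('C(#|~: A| * #|~: B|, l) * k ^ l)%N%:R :> int.
Proof.
rewrite natr_card_set.
under eq_bigr => M _ do rewrite -mulnb natrM natr_packed big_distrl /=.
rewrite exchange_big; apply: eq_bigr => A _.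
under eq_bigr => M _ do rewrite big_distrl /=.
rewrite exchange_big; apply: eq_bigr => B _.
rewrite -(card_zero_rows_cols k A B l) natr_card_set big_distrr /=.
by apply: eq_bigr => M _; rewrite -mulrA -natrM mulnb andbC.
Qed.

Lemma sum_subsets_by_card n (F : nat -> int) :
  \sum_(A : {set 'I_n}) F #|A| = \sum_(0 <= i < n.+1) 'C(n, i)%:R * F i.
Proof.
transitivity (\sum_(A : {set 'I_n}) \sum_(0 <= i < n.+1) (#|A| == i : nat)%:R * F i).
  apply: eq_bigr => A _; rewrite (bigD1_seq #|A|) ?iota_uniq //=; last first.
    by rewrite mem_index_iota /= ltnS (leq_trans (max_card _)) ?card_ord.
  rewrite eqxx mul1r big1 ?addr0 // => i.
  by rewrite eq_sym => /negPf ->; rewrite mul0r.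
rewrite exchange_big; apply: eq_bigr => i _; rewrite -big_distrl /= -natr_sum.
rewrite -[n in 'C(n, _)]card_ord -card_draws -sum1dep_card [in RHS]big_mkcond /=.
by congr (_%:R * _); apply: eq_bigr => A _; case: (_ == _).
Qed.

Lemma cardsC_ord n (A : {set 'I_n}) : #|~: A| = (n - #|A|)%N.
Proof. by have := cardsC A; rewrite card_ord; lia. Qed.

Lemma signr_subn_subn n i j : (i <= n)%N -> (j <= n)%N ->
  (-1) ^+ ((n - i) + (n - j)) = (-1) ^+ (i + j) :> int.
Proof.
move=> le_in le_jn; rewrite -signr_odd -[RHS]signr_odd !oddD !oddB //.
by case: (odd n); case: (odd i); case: (odd j).
Qed.

Theorem proposition1p2 (k n l : nat) (hk : (1 <= k)%N) :
  (#|Pset k n l|%:Z =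
   \sum_(0 <= i < n.+1) \sum_(0 <= j < n.+1)
      (-1) ^+ (i + j) * ('C(n, i) * 'C(n, j) * 'C(i * j, l) * k ^ l)%N%:Z)%R.
Proof.
rewrite -natz card_Pset_subsets (reindex_inj (@setC_inj _)) /=.
under eq_bigr => A _ do rewrite (reindex_inj (@setC_inj _)) /=.
under eq_bigr => A _ do under eq_bigr => B _ do rewrite !setCK !cardsC_ord.
rewrite (sum_subsets_by_card n (fun a => \sum_(B : {set 'I_n})
  (-1) ^+ (n - a + (n - #|B|))%N * ('C(a * #|B|, l) * k ^ l)%N%:R)).
apply: eq_big_nat => i /andP[_ le_in].
rewrite (sum_subsets_by_card n (fun b =>
  (-1) ^+ (n - i + (n - b))%N * ('C(i * b, l) * k ^ l)%N%:R)) big_distrr /=.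
apply: eq_big_nat => j /andP[_ le_jn].
rewrite signr_subn_subn // -!natz !natrM; ring.
Qed.
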